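(* Consider the system \[ x_{k+1} = x_k - \rho y_k + \hat g(y_k,w_k),\qquad y_{k+1} = (1-\beta)y_k + \hat h(y_{k-1},w_{k-1})\bigl(J(x_k)-J(x_{k-1})\bigr) \] with the setup described in the context. Then for any $k\ge1$, \[ \mathbb{E}[\mu h_{k-1}g_{k-1}\Delta_{k-1}]=\frac{\mu\gamma}{2}\Bigl(\rho^2\mathbb{E}[y_{k-1}^2]-2\rho\,\mathbb{E}[\tilde x_{k-1}y_{k-1}]+\psi\,\mathbb{E}\bigl[(|y_{k-1}|+\varepsilon)^2\bigr]\Bigr). \]
   Context: Setup. Parameters: $\rho>0$, $\beta\in(0,2)$, $\varepsilon>0$, $\omega>0$. The random variables $w_i$, $i\in\mathbb{N}\cup\{0\}$, are i.i.d., each taking the value $-\omega$ or $\omega$ with probability $1/2$. The functions $h,g:\mathbb{R}\to\mathbb{R}$ are odd, satisfy $\mathrm{sign}(g(w))=\mathrm{sign}(h(w))$ for all $w$, and $g(w)=h(w)=0$ if and only if $w=0$. Define $\hat h(y,w):=\frac{h(w)}{|y|+\varepsilon}$ and $\hat g(y,w):=(|y|+\varepsilon)g(w)$. The objective is $J(x)=J^*+\frac{\mu}{2}(x-x^* )^2$ with $\mu>0$, $x^*,J^*\in\mathbb{R}$. The initial data $x_0,y_0$ and the initialization $y_1$ (the $y$-update being applied for $k\ge1$) are deterministic. Notation: $h_k:=h(w_k)$, $g_k:=g(w_k)$, $\tilde x_k:=x_k-x^*$, $\psi:=\mathbb{E}[g_k^2]$, $\gamma:=\mathbb{E}[h_kg_k]$,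 and \[ \Delta_{k-1}:=(\tilde x_{k-1}-\rho y_{k-1})(|y_{k-1}|+\varepsilon)g_{k-1}-\rho\tilde x_{k-1}y_{k-1}+\tfrac{\rho^2}{2}y_{k-1}^2+\tfrac{g_{k-1}^2}{2}(|y_{k-1}|+\varepsilon)^2 . \] *)

From mathcomp Require Import all_boot all_order all_algebra.
Set Implicit Arguments. Unset Strict Implicit. Unset Printing Implicit Defensive.
Import Order.TTheory GRing.Theory Num.Theory.
Local Open Scope ring_scope.

Section Defs.
Variable R : realFieldType.

(* realisation of the noise sequence from a sign pattern b over 'I_N:
   w_i = omega if b_i, -omega otherwise (w_i := 0 for i >= N, never used). *)
Definition wseq (omega : R) (N : nat) (b : {ffun 'I_N -> bool}) : nat -> R :=
  fun i => match insub i with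
           | Some j => if b j then omega else - omega
           | None => 0
           end.

(* Expectation of a functional of (w_0,...,w_{N-1}), with the w_i i.i.d.
   uniform on {-omega, omega}: average over all 2^N sign patterns. *)
Definition Exp (omega : R) (N : nat) (F : (nat -> R) -> R) : R :=
  (\sum_(b : {ffun 'I_N -> bool}) F (wseq omega b)) / (2 ^+ N).

Definition Exp1 (omega : R) (f : R -> R) : R := (f omega + f (- omega)) / 2.

Definition ghat (eps : R) (g : R -> R) (y w : R) : R := (`|y| + eps) * g w.
Definition hhat (eps : R) (h : R -> R) (y w : R) : R := h w / (`|y| + eps).

Definition Jq (Jstar mu xstar : R) (x : R) : R := Jstar + mu / 2 * (x - xstar) ^+ 2.

(* state at step n: (x_n, x_{n+1}, y_n, y_{n+1}), for the noise path w.
   x_{k+1} = x_k - rho y_k + ghat(y_k, w_k)   (k >= 0)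
   y_{k+1} = (1-beta) y_k + hhat(y_{k-1}, w_{k-1}) (J x_k - J x_{k-1})  (k >= 1)
   with x_0, y_0, y_1 given. *)
Fixpoint state (rho beta eps : R) (h g J : R -> R) (x0 y0 y1 : R)
  (w : nat -> R) (n : nat) : R * R * R * R :=
  match n with
  | 0 => (x0, x0 - rho * y0 + ghat eps g y0 (w 0), y0, y1)
  | n'.+1 =>
      let '(xa, xb, ya, yb) := state rho beta eps h g J x0 y0 y1 w n' in
      (xb, xb - rho * yb + ghat eps g yb (w n),
       yb, (1 - beta) * yb + hhat eps h ya (w n') * (J xb - J xa))
  end.

Definition xs rho beta eps h g J x0 y0 y1 w n :=
  (state rho beta eps h g J x0 y0 y1 w n).1.1.1.
Definition ys rho beta eps h g J x0 y0 y1 w n :=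
  (state rho beta eps h g J x0 y0 y1 w n).1.2.

End Defs.

From mathcomp Require Import all_boot all_order all_algebra.
From mathcomp Require Import ring lra zify.
Set Implicit Arguments. Unset Strict Implicit.
Import Order.TTheory GRing.Theory Num.Theory.
Local Open Scope ring_scope.

(* The iterates x_{k-1}, y_{k-1} are functions of w_0, ..., w_{k-2} only.
   Since h and g are odd, h g and g^2 are even, so h_{k-1} g_{k-1} = gamma
   and g_{k-1}^2 = psi hold surely, and the remaining cross term
   h_{k-1} g_{k-1}^2 (x~_{k-1} - rho y_{k-1}) (|y_{k-1}| + eps) is odd in
   w_{k-1}: flipping the sign of w_{k-1} shows that its expectation is zero. *)

Section Causality.
Variables (R : realFieldType) (rho beta eps x0 y0 y1 : R) (h g J : R -> R).

Lemma state_eq_prefix (w w' : nat -> R) n :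
  (forall i, (i <= n)%N -> w i = w' i) ->
  state rho beta eps h g J x0 y0 y1 w n = state rho beta eps h g J x0 y0 y1 w' n.
Proof.
elim: n => [|n IHn] ww' /=; first by rewrite ww'.
rewrite IHn => [|i le_in]; last by apply: ww'; lia.
case: (state _ _ _ _ _ _ _ _ _ w' n) => [[[xa xb] ya] yb].
by rewrite (ww' n.+1) // (ww' n) //; lia.
Qed.

Lemma xs_ys_eq_prefix (w w' : nat -> R) n :
  (forall i, (i < n)%N -> w i = w' i) ->
  xs rho beta eps h g J x0 y0 y1 w n = xs rho beta eps h g J x0 y0 y1 w' n /\
  ys rho beta eps h g J x0 y0 y1 w n = ys rho beta eps h g J x0 y0 y1 w' n.
Proof.
case: n => [|n] ww'; first by [].
rewrite /xs /ys /= (@state_eq_prefix w w') => [|i le_in]; last by apply: ww'.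
by case: (state _ _ _ _ _ _ _ _ _ w' n) => [[[? ?] ?] ?].
Qed.

End Causality.

Section Expectation.
Variables (R : realFieldType) (omega : R) (N : nat).
Implicit Types (F G : (nat -> R) -> R) (b : {ffun 'I_N -> bool}) (j : 'I_N).

Lemma Exp_ext F G :
  (forall b, F (wseq omega b) = G (wseq omega b)) -> Exp omega N F = Exp omega N G.
Proof. by move=> FG; rewrite /Exp (eq_bigr _ (fun b _ => FG b)). Qed.

Lemma ExpD F G : Exp omega N (fun w => F w + G w) = Exp omega N F + Exp omega N G.
Proof. by rewrite /Exp big_split mulrDl. Qed.

Lemma ExpB F G : Exp omega N (fun w => F w - G w) = Exp omega N F - Exp omega N G.
Proof. by rewrite /Exp big_split sumrN mulrBl. Qed.

Lemma ExpZ (c : R) F : Exp omega N (fun w => c * F w) = c * Exp omega N F.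
Proof. by rewrite /Exp -mulr_sumr mulrA. Qed.

Definition flip_at j b : {ffun 'I_N -> bool} := [ffun i => b i (+) (i == j)].

Lemma flip_atK j : involutive (flip_at j).
Proof. by move=> b; apply/ffunP => i; rewrite !ffunE addbK. Qed.

Lemma wseq_ord b j : wseq omega b j = if b j then omega else - omega.
Proof.
rewrite /wseq; case: insubP => [i _ ij | ]; first by rewrite (val_inj ij).
by rewrite ltn_ord.
Qed.

Lemma wseq_flip_at j b i :
  wseq omega (flip_at j b) i = if i == j then - wseq omega b i else wseq omega b i.
Proof.
rewrite /wseq; case: insubP => [i' _ <- | lt_iN].
  by rewrite ffunE (inj_eq val_inj); case: eqP; case: (b i') => //=; rewrite opprK.
by case: eqP => // ij; rewrite ij ltn_ord in lt_iN.
Qed.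

Lemma Exp_odd_eq0 j F :
  (forall b, F (wseq omega (flip_at j b)) = - F (wseq omega b)) -> Exp omega N F = 0.
Proof.
move=> Fodd; rewrite /Exp.
pose S := \sum_(b : {ffun 'I_N -> bool}) F (wseq omega b).
have sumN : S = - S.
  rewrite -sumrN -(eq_bigr _ (fun b _ => Fodd b)).
  exact: reindex_inj (can_inj (flip_atK j)).
by rewrite -/S (_ : S = 0) ?mul0r //; lra.
Qed.

Lemma even_wseq (f : R -> R) b j :
  (forall v, f (- v) = f v) -> f (wseq omega b j) = Exp1 omega f.
Proof. by move=> f_even; rewrite wseq_ord /Exp1; case: (b j); rewrite !f_even; field. Qed.

End Expectation.

Theorem lemma4 (R : realFieldType)
  (rho beta eps omega mu xstar Jstar x0 y0 y1 : R) (h g : R -> R)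
  (Hrho : 0 < rho) (Hbeta : 0 < beta < 2) (Heps : 0 < eps) (Homega : 0 < omega)
  (Hmu : 0 < mu)
  (Hh_odd : forall w, h (- w) = - h w) (Hg_odd : forall w, g (- w) = - g w)
  (Hsign : forall w, Num.sg (g w) = Num.sg (h w))
  (Hg0 : forall w, g w = 0 <-> w = 0) (Hh0 : forall w, h w = 0 <-> w = 0)
  (k N : nat) (Hk : (1 <= k)%N) (HN : (k <= N)%N) :
  let J := Jq Jstar mu xstar in
  let x := xs rho beta eps h g J x0 y0 y1 in
  let y := ys rho beta eps h g J x0 y0 y1 in
  let xt := fun w n => x w n - xstar in
  let psi := Exp1 omega (fun v => g v ^+ 2) in
  let gamma := Exp1 omega (fun v => h v * g v) in
  let Delta := fun w n =>
    (xt w n - rho * y w n) * (`|y w n| + eps) * g (w n)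
    - rho * xt w n * y w n + rho ^+ 2 / 2 * y w n ^+ 2
    + g (w n) ^+ 2 / 2 * (`|y w n| + eps) ^+ 2 in
  Exp omega N (fun w => mu * h (w k.-1) * g (w k.-1) * Delta w k.-1)
  = mu * gamma / 2 *
    (rho ^+ 2 * Exp omega N (fun w => y w k.-1 ^+ 2)
     - 2 * rho * Exp omega N (fun w => xt w k.-1 * y w k.-1)
     + psi * Exp omega N (fun w => (`|y w k.-1| + eps) ^+ 2)).
Proof.
move=> J x y xt psi gamma Delta.
have lt_kN : (k.-1 < N)%N by lia.
pose j := Ordinal lt_kN; rewrite (_ : k.-1 = j) //.
pose cross (w : nat -> R) :=
  mu * h (w j) * g (w j) ^+ 2 * ((xt w j - rho * y w j) * (`|y w j| + eps)).
have cross_odd b : cross (wseq omega (flip_at j b)) = - cross (wseq omega b).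
  have same_past i : (i < j)%N -> wseq omega (flip_at j b) i = wseq omega b i.
    by move=> lt_ij; rewrite wseq_flip_at (ltn_eqF lt_ij).
  have [xE yE] : x (wseq omega (flip_at j b)) j = x (wseq omega b) j /\
                 y (wseq omega (flip_at j b)) j = y (wseq omega b) j.
    exact: xs_ys_eq_prefix same_past.
  by rewrite /cross /xt xE yE wseq_flip_at eqxx Hh_odd Hg_odd; ring.
have hg_even v : h (- v) * g (- v) = h v * g v by rewrite Hh_odd Hg_odd mulrNN.
have g2_even v : g (- v) ^+ 2 = g v ^+ 2 by rewrite Hg_odd sqrrN.
rewrite (Exp_ext (G := fun w => cross w + mu * gamma / 2 *
   (rho ^+ 2 * y w j ^+ 2 - 2 * rho * (xt w j * y w j)
    + psi * (`|y w j| + eps) ^+ 2))); last first.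
  move=> b; rewrite /gamma /psi /Delta /cross.
  by rewrite -(even_wseq omega b j hg_even) -(even_wseq omega b j g2_even); field.
by rewrite ExpD (Exp_odd_eq0 cross_odd) add0r ExpZ ExpD ExpB !ExpZ.
Qed.
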